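(* Let $n\ge 1$ and let $\mathbb{F}_q$ be a finite field. The adjacency matrix of the unit-graph on $\operatorname{Mat}_n(\mathbb{F}_q)$ has at most $n+1$ distinct eigenvalues.
   Context: The unit-graph on $\operatorname{Mat}_n(\mathbb{F}_q)$ is the Cayley digraph $\operatorname{Cay}(\operatorname{Mat}_n(\mathbb{F}_q), \operatorname{GL}_n(\mathbb{F}_q))$: its vertex set is $\operatorname{Mat}_n(\mathbb{F}_q)$ and there is a directed edge from $A$ to $B$ iff $B - A$ is invertible; it is regarded as an undirected graph since $\operatorname{GL}_n(\mathbb{F}_q)$ is closed under negation. *)

From HB Require Import structures.
From mathcomp Require Import all_boot all_order all_algebra all_field.
Set Implicit Arguments. Unset Strict Implicit. Unset Printing Implicit Defensive.
Import GRing.Theory Num.Theory.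
Local Open Scope ring_scope.

Definition unit_graph_adj (F : finFieldType) (n : nat)
  : 'M[algC]_(#|{: 'M[F]_n}|) :=
  \matrix_(i, j) (if (enum_val j - enum_val i : 'M[F]_n) \in unitmx
                  then 1 else 0).

From HB Require Import structures.
From mathcomp Require Import all_boot all_order all_algebra all_field.
Local Open Scope ring_scope.
Set Implicit Arguments. Unset Strict Implicit. Unset Printing Implicit Defensive.
Import GRing.Theory.

(* Call a matrix indexed by Mat_n(F) a rank kernel if its (X, Y) entry only
   depends on rank(Y - X).  Since (X, Y) can be moved to (0, pid_mx r) by a
   translation followed by an equivalence Z |-> P Z Q, rank kernels are closed
   under products (they form the Bose-Mesner algebra of the bilinear forms
   scheme) and are spanned by the n + 1 rank-distance matrices.  The unit-graph
   adjacency matrix is the rank-distance-n matrix, so its powers span a space of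
   dimension at most n + 1: its minimal polynomial has degree at most n + 1, and
   every eigenvalue is a root of it. *)

Section EigenvaluesAndPowerSpace.
Variable K : fieldType.

Lemma degree_mxminpoly_le_rank m p (A : 'M[K]_m.+1) (B : 'M_(p, m.+1 * m.+1)) :
  (forall k, A ^+ k \in B)%MS -> (degree_mxminpoly A <= \rank B)%N.
Proof.
move=> powAB; rewrite -(eqnP (minpoly_mx_free A)); apply: mxrankS.
by apply/row_subP => i; rewrite rowK.
Qed.

Lemma size_eigenvalues_le_degree m (A : 'M[K]_m.+1) (s : seq K) :
  uniq s -> all (eigenvalue A) s -> (size s <= degree_mxminpoly A)%N.
Proof.
move=> uniq_s eig_s; rewrite -ltnS -size_mxminpoly.
apply: max_poly_roots uniq_s; first by rewrite monic_neq0 ?mxminpoly_monic.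
by apply/allP => a /(allP eig_s); rewrite eigenvalue_root_min.
Qed.

Lemma size_eigenvalues_le_rank m p (A : 'M[K]_m) (B : 'M_(p, m * m))
    (s : seq K) :
  (forall k, A ^+ k \in B)%MS -> uniq s -> all (eigenvalue A) s ->
  (size s <= \rank B)%N.
Proof.
case: m => [|m] in A B *.
  case: s => [|a s] // _ _ /andP[/eigenvalueP[v _]].
  by rewrite thinmx0 eqxx.
move=> powAB uniq_s eig_s.
exact: leq_trans (size_eigenvalues_le_degree uniq_s eig_s)
                 (degree_mxminpoly_le_rank powAB).
Qed.

End EigenvaluesAndPowerSpace.

Section RankKernels.
Variables (F : finFieldType) (n : nat) (R : nzRingType).
Local Notation N := #|{: 'M[F]_n}|.

Definition rank_kernel_mx (h : nat -> R) : 'M[R]_N :=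
  \matrix_(i, j) h (\rank (enum_val j - enum_val i : 'M[F]_n)).

Definition rank_distance_mx (l : nat) : 'M[R]_N :=
  rank_kernel_mx (fun r => (r == l)%:R).

Definition rank_conv (g h : nat -> R) (D : 'M[F]_n) : R :=
  \sum_(Z : 'M[F]_n) g (\rank (D - Z)) * h (\rank Z).

Lemma rank_conv_equiv g h (P Q D : 'M[F]_n) :
  P \in unitmx -> Q \in unitmx -> rank_conv g h (P *m D *m Q) = rank_conv g h D.
Proof.
rewrite -row_full_unit -row_free_unit => fullP freeQ.
have rkPQ (Z : 'M[F]_n) : \rank (P *m Z *m Q) = \rank Z.
  by rewrite mxrankMfree // eqmxMfull.
have injPQ : injective (fun Z : 'M[F]_n => P *m Z *m Q).
  by move=> Z1 Z2 /(row_free_inj freeQ)/(row_full_inj fullP).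
rewrite /rank_conv (reindex_inj injPQ); apply: eq_bigr => Z _.
by rewrite -mulmxBl -mulmxBr !rkPQ.
Qed.

Lemma rank_conv_pid g h D : rank_conv g h D = rank_conv g h (pid_mx (\rank D)).
Proof.
by rewrite -{1}(mulmx_ebase D) rank_conv_equiv ?col_ebase_unit ?row_ebase_unit.
Qed.

Lemma mul_rank_kernel_mx g h :
  rank_kernel_mx g *m rank_kernel_mx h
  = rank_kernel_mx (fun r => rank_conv g h (pid_mx r)).
Proof.
apply/matrixP => i j; rewrite !mxE -rank_conv_pid.
pose f X := g (\rank (X - enum_val i)) * h (\rank (enum_val j - X)).
transitivity (\sum_(X in {: 'M[F]_n}) f X).
  by rewrite [RHS]big_enum_val; apply: eq_bigr => k _; rewrite !mxE.
rewrite (reindex_inj (inv_inj (subKr (enum_val j)))).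
by apply: eq_bigr => Z _; rewrite /f subKr addrAC.
Qed.

Lemma rank_distance_mx0 : rank_distance_mx 0 = 1%:M.
Proof.
apply/matrixP => i j; rewrite !mxE mxrank_eq0 subr_eq0 (inj_eq enum_val_inj).
by rewrite eq_sym.
Qed.

Lemma exp_rank_kernel_mx h k : exists g, rank_kernel_mx h ^+ k = rank_kernel_mx g.
Proof.
elim: k => [|k [g IHk]].
  by exists (fun r => (r == 0)%:R); rewrite expr0; exact: esym rank_distance_mx0.
exists (fun r => rank_conv g h (pid_mx r)).
by rewrite exprSr IHk -mulmxE mul_rank_kernel_mx.
Qed.

Lemma rank_kernel_mx_distance h :
  rank_kernel_mx h = \sum_(l < n.+1) h l *: rank_distance_mx l.
Proof.
apply/matrixP => i j; rewrite summxE !mxE.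
set r := \rank _; have lt_r_n1 : (r < n.+1)%N by rewrite ltnS rank_leq_row.
rewrite (bigD1 (Ordinal lt_r_n1)) //= big1 ?addr0 => [|l ne_l_r].
  by rewrite !mxE eqxx mulr1.
rewrite !mxE; case: eqP => [r_l|]; last by rewrite mulr0.
by case/eqP: ne_l_r; apply: val_inj.
Qed.

End RankKernels.

Section RankDistanceSpace.
Variables (F : finFieldType) (n : nat) (K : fieldType).
Local Notation N := #|{: 'M[F]_n}|.

Definition rank_distance_space : 'M[K]_(n.+1, N * N) :=
  \matrix_(l < n.+1) mxvec (rank_distance_mx F n K l).

Lemma rank_kernel_mx_sub (h : nat -> K) :
  (rank_kernel_mx F n h \in rank_distance_space)%MS.
Proof.
rewrite rank_kernel_mx_distance linear_sum; apply: summx_sub => l _.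
by rewrite linearZ scalemx_sub //; apply: (eq_row_sub l); rewrite rowK.
Qed.

Lemma exp_rank_distance_mx_sub l k :
  (rank_distance_mx F n K l ^+ k \in rank_distance_space)%MS.
Proof.
have [h ->] := exp_rank_kernel_mx F n (fun r => (r == l)%:R : K) k.
exact: rank_kernel_mx_sub.
Qed.

End RankDistanceSpace.

Lemma unit_graph_adj_distance (F : finFieldType) n :
  unit_graph_adj F n = rank_distance_mx F n algC n.
Proof.
by apply/matrixP => i j; rewrite !mxE -row_full_unit /row_full; case: (_ == n).
Qed.

Theorem proposition3p2 (F : finFieldType) (n : nat) (hn : (0 < n)%N)
  (s : seq algC) :
  uniq s -> all (eigenvalue (unit_graph_adj F n)) s -> (size s <= n.+1)%N.
Proof.
rewrite unit_graph_adj_distance => uniq_s eig_s.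
apply: leq_trans (rank_leq_row (rank_distance_space F n algC)).
exact: size_eigenvalues_le_rank (exp_rank_distance_mx_sub F n algC n)
         uniq_s eig_s.
Qed.
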